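(* Let $k \ge 1$, $m = 4k+3$, $\theta = 2\pi/m$, and let $P$ be a finite point set in general position. For any two vertices $u, w \in P$, let $M$ be the midpoint of the side of $T_{uw}$ opposite $u$ and let $\alpha$ be the unsigned angle between $uw$ and $uM$. Then the $\theta_m$-graph on $P$ contains a path from $u$ to $w$ of length at most $$\left(\frac{\cos\alpha}{\cos(\theta/2)} + \frac{(\cos\alpha\tan(\theta/2) + \sin\alpha)\cos(\theta/4)}{\cos(\theta/2) - \sin(3\theta/4)}\right)|uw|.$$
   Context: Cones: for $m \ge 2$, $\theta = 2\pi/m$; around each point $u$ draw $m$ rays with consecutive angular separation $\theta$, oriented so the vertical upward ray from $u$ bisects a cone $C_0^u$; cones numbered $C_0^u,\dots,C_{m-1}^u$ clockwise, same orientation at every point. General position: no two points on a line parallel to a cone boundary ray, no two on a line perpendicular to a cone bisector, no three collinear. The $\theta_m$-graph on $P$: for each $u\in P$ and each cone $C_i^u$ containing another point of $P$, add an edge from $u$ to the point of $C_i^u$ whose orthogonal projection onto the bisector of $C_i^u$ is closest to $u$; edges weighted by Euclidean length. Canonical triangle: if $w$ lies in cone $C$ of $u$, $T_{uw}$ is the triangle bounded by the two boundary rays of $C$ and the line through $w$ perpendicular to the bisector of $C$. *)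

From Stdlib Require Import Reals Lra List.
Open Scope R_scope.

Definition pt := (R * R)%type.

Definition edist (p q : pt) : R :=
  sqrt ((fst q - fst p) ^ 2 + (snd q - snd p) ^ 2).

Definition theta (m : nat) : R := 2 * PI / INR m.

(* Direction angle (from the positive x-axis, counterclockwise) of the
   bisector of cone C_i: C_0 is bisected by the upward vertical ray, and
   cones are numbered clockwise. *)
Definition bis_angle (m i : nat) : R := PI / 2 - INR i * theta m.

Definition proj (m i : nat) (u v : pt) : R :=
  (fst v - fst u) * cos (bis_angle m i) + (snd v - snd u) * sin (bis_angle m i).

(* v lies in cone C_i^u (closed cone of half-aperture theta/2 around the
   bisector; boundaries are irrelevant under general position). *)
Definition in_cone (m i : nat) (u v : pt) : Prop :=
  (i < m)%nat /\ v <> u /\ proj m i u v >= edist u v * cos (theta m / 2).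

Definition theta_dir_edge (m : nat) (P : list pt) (u v : pt) : Prop :=
  In u P /\ In v P /\
  exists i, in_cone m i u v /\
    forall w, In w P -> in_cone m i u w -> proj m i u v <= proj m i u w.

Definition theta_edge (m : nat) (P : list pt) (u v : pt) : Prop :=
  theta_dir_edge m P u v \/ theta_dir_edge m P v u.

Fixpoint is_path (E : pt -> pt -> Prop) (u : pt) (l : list pt) (w : pt) : Prop :=
  match l with
  | nil => u = w
  | v :: l' => E u v /\ is_path E v l' w
  end.

Fixpoint path_length (u : pt) (l : list pt) : R :=
  match l with
  | nil => 0
  | v :: l' => edist u v + path_length v l'
  end.

Definition cross (p q r : pt) : R :=
  (fst q - fst p) * (snd r - snd p) - (snd q - snd p) * (fst r - fst p).

Definition general_position (m : nat) (P : list pt) : Prop :=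
  (* no two points on a line parallel to a cone boundary ray *)
  (forall p q i, In p P -> In q P -> p <> q -> (i < m)%nat ->
     let b := bis_angle m i - theta m / 2 in
     (fst q - fst p) * sin b - (snd q - snd p) * cos b <> 0) /\
  (forall p q i, In p P -> In q P -> p <> q -> (i < m)%nat ->
     proj m i p q <> 0) /\
  (forall p q r, In p P -> In q P -> In r P -> p <> q -> p <> r -> q <> r ->
     cross p q r <> 0).

(* Canonical triangle T_uw for w in cone C_i^u: its apex is u, the two other
   vertices lie on the boundary rays of C_i^u at the line through w
   perpendicular to the bisector. *)
Definition tri_vertex (m i : nat) (u w : pt) (s : R) : pt :=
  let h := proj m i u w in
  let b := bis_angle m i + s * (theta m / 2) in
  (fst u + h / cos (theta m / 2) * cos b, snd u + h / cos (theta m / 2) * sin b).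

Definition tri_mid (m i : nat) (u w : pt) : pt :=
  let A := tri_vertex m i u w 1 in
  let B := tri_vertex m i u w (-1) in
  ((fst A + fst B) / 2, (snd A + snd B) / 2).

Definition uangle (u p q : pt) : R :=
  acos (((fst p - fst u) * (fst q - fst u) + (snd p - snd u) * (snd q - snd u))
        / (edist u p * edist u q)).

From Stdlib Require Import Reals Lra Lia List ZArith Classical.
Open Scope R_scope.

(* Write g = θ/4 and let (p, l) be the coordinates of w - u along and across
   the bisector of the cone C_i^u containing w.  Since cos α = p / |uw| and
   sin α = |l| / |uw|, the bound is the potential K p + C |l|, where
   C = cos g / (cos 2g - sin 3g) and K = 1 / cos 2g + C tan 2g.  Follow the
   edge from u to the point v of P in C_i^u with the smallest projection on
   the bisector: it costs at most K p_v - C |l_v|, and |vw| < |uw|.  It remains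
   to see that measuring w in the cone C_j^v that contains it, instead of in
   the frame of C_i, does not increase the potential.  C_j is C_i rotated by
   n cones, and by symmetry 1 <= n <= k + 1.  For n <= k the comparison is
   sublinear in (p, l), so it suffices to check it on the boundary rays of
   C_j, where it compares the sinusoid C cos ψ + K sin ψ on [g, π/2 - 2g]
   with its value at both ends (equal by the choice of C and K).  Since
   m = 4k + 3, a rotation by k + 1 cones is a rotation by π/2 + g, for which
   the comparison is an identity, and rotations by k + 2, ..., 3k + 1 cones
   would put w behind v.  Induction on the number of pairs of P closer than
   |uw| concludes. *)

Definition lat_coef (g : R) : R := cos g / (cos (2 * g) - sin (3 * g)).
Definition proj_coef (g : R) : R := 1 / cos (2 * g) + lat_coef g * tan (2 * g).
Definition potential (g p l : R) : R := proj_coef g * p + lat_coef g * Rabs l.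

Lemma sin_3a x : sin (3 * x) = 3 * sin x - 4 * sin x ^ 3.
Proof.
  replace (3 * x) with (2 * x + x) by ring.
  rewrite sin_plus, sin_2a, cos_2a_sin.
  pose proof (sin2_cos2 x) as Hx; unfold Rsqr in Hx.
  replace (2 * sin x * cos x * cos x) with (2 * sin x * (cos x * cos x)) by ring.
  replace (cos x * cos x) with (1 - sin x * sin x) by lra.
  ring.
Qed.

Lemma sin_add_le x y : 0 <= sin x -> 0 <= sin y -> sin (x + y) <= sin x + sin y.
Proof.
  intros Hx Hy. rewrite sin_plus.
  pose proof (COS_bound x). pose proof (COS_bound y). nra.
Qed.

(* Interpolating at [a] and [b] with the weights [sin (b - psi)] and
   [sin (psi - a)], whose sum is at least [sin (b - a)]. *)
Lemma sinusoid_ge_endpoints A B M a b psi :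
  0 <= M -> a <= psi <= b -> b - a < PI ->
  M <= A * cos a + B * sin a -> M <= A * cos b + B * sin b ->
  M <= A * cos psi + B * sin psi.
Proof.
  intros HM Hpsi Hab Ha Hb. pose proof PI_RGT_0.
  destruct (Req_dec a b) as [<- | Hne]; [replace psi with a by lra; lra|].
  assert (Hinterp : (A * cos psi + B * sin psi) * sin (b - a) =
    (A * cos a + B * sin a) * sin (b - psi) + (A * cos b + B * sin b) * sin (psi - a))
    by (rewrite !sin_minus; ring).
  assert (Hba : 0 < sin (b - a)) by (apply sin_gt_0; lra).
  assert (0 <= sin (b - psi)) by (apply sin_ge_0; lra).
  assert (0 <= sin (psi - a)) by (apply sin_ge_0; lra).
  assert (sin (b - a) <= sin (b - psi) + sin (psi - a)).
  { replace (b - a) with ((b - psi) + (psi - a)) at 1 by ring. now apply sin_add_le. }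
  apply (Rmult_le_reg_r (sin (b - a))); [lra|]. rewrite Hinterp. nra.
Qed.

Section Coefficients.

Variable g : R.
Hypothesis g_pos : 0 < g.
Hypothesis g_small : 14 * g <= PI.

Lemma sin_g_pos : 0 < sin g.
Proof. pose proof PI_RGT_0. apply sin_gt_0; lra. Qed.

Lemma cos_g_pos : 0 < cos g.
Proof. pose proof PI_RGT_0. apply cos_gt_0; lra. Qed.

Lemma cos_2g_pos : 0 < cos (2 * g).
Proof. pose proof PI_RGT_0. apply cos_gt_0; lra. Qed.

Lemma sin_2g_pos : 0 < sin (2 * g).
Proof. pose proof PI_RGT_0. apply sin_gt_0; lra. Qed.

Lemma sin_3g_lt_cos_2g : sin (3 * g) < cos (2 * g).
Proof.
  pose proof PI_RGT_0. rewrite <- sin_shift. apply sin_increasing_1; lra.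
Qed.

Lemma sin_2g_sq_lt : 3 * sin (2 * g) ^ 2 < cos (2 * g) ^ 2.
Proof.
  pose proof PI_RGT_0. pose proof sin_2g_pos.
  assert (sin (2 * g) < 1 / 2).
  { rewrite <- sin_PI6. apply sin_increasing_1; lra. }
  pose proof (sin2_cos2 (2 * g)) as Hsc; unfold Rsqr in Hsc. nra.
Qed.

Lemma lat_coef_pos : 0 < lat_coef g.
Proof.
  pose proof cos_g_pos. pose proof sin_3g_lt_cos_2g.
  unfold lat_coef. apply Rdiv_lt_0_compat; lra.
Qed.

Lemma proj_coef_pos : 0 < proj_coef g.
Proof.
  pose proof cos_2g_pos. pose proof sin_2g_pos. pose proof lat_coef_pos.
  assert (0 < tan (2 * g)) by (unfold tan; apply Rdiv_lt_0_compat; lra).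
  assert (0 < 1 / cos (2 * g)) by (apply Rdiv_lt_0_compat; lra).
  unfold proj_coef. nra.
Qed.

Lemma proj_coef_mul_1_add_sin : proj_coef g * (1 + sin g) = lat_coef g * cos g.
Proof.
  pose proof cos_2g_pos. pose proof sin_3g_lt_cos_2g.
  unfold proj_coef, lat_coef, tan.
  field_simplify_eq; [|lra].
  rewrite sin_3a, sin_2a, cos_2a_sin in *.
  pose proof (sin2_cos2 g) as Hsc; unfold Rsqr in Hsc.
  ring_simplify. replace (cos g ^ 2) with (1 - sin g ^ 2) by nra. ring.
Qed.

Lemma lat_coef_eq : lat_coef g = proj_coef g * cos g + lat_coef g * sin g.
Proof.
  pose proof sin_g_pos. pose proof cos_g_pos.
  pose proof (sin2_cos2 g) as Hsc; unfold Rsqr in Hsc.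
  apply (Rmult_eq_reg_r (1 + sin g)); [|lra].
  replace ((proj_coef g * cos g + lat_coef g * sin g) * (1 + sin g))
    with (cos g * (proj_coef g * (1 + sin g)) + lat_coef g * (sin g + sin g * sin g)) by ring.
  rewrite proj_coef_mul_1_add_sin.
  replace (sin g * sin g) with (1 - cos g * cos g) by lra. ring.
Qed.

Lemma potential_boundary_eq :
  lat_coef g * cos g + proj_coef g * sin g =
  proj_coef g * cos (2 * g) + lat_coef g * sin (2 * g).
Proof.
  pose proof cos_2g_pos. pose proof sin_3g_lt_cos_2g.
  unfold proj_coef, lat_coef, tan.
  field_simplify_eq; [|lra].
  rewrite sin_3a, sin_2a, cos_2a_sin in *.
  pose proof (sin2_cos2 g) as Hsc; unfold Rsqr in Hsc.
  ring_simplify. replace (cos g ^ 2) with (1 - sin g ^ 2) by nra. ring.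
Qed.

Lemma potential_boundary_le psi : g <= psi <= PI / 2 - 2 * g ->
  proj_coef g * cos (2 * g) + lat_coef g * sin (2 * g) <=
  lat_coef g * cos psi + proj_coef g * sin psi.
Proof.
  intros Hpsi. pose proof PI_RGT_0.
  pose proof cos_2g_pos. pose proof sin_2g_pos.
  pose proof lat_coef_pos. pose proof proj_coef_pos.
  apply (sinusoid_ge_endpoints _ _ _ g (PI / 2 - 2 * g)); try lra.
  - nra.
  - rewrite potential_boundary_eq. lra.
  - rewrite cos_shift, sin_shift. lra.
Qed.

End Coefficients.

(* [(p, l)] is a nonnegative combination of the boundary rays [(c, s)] and
   [(c, -s)], on which the inequality holds, and its left side is sublinear. *)
Lemma cone_sublinear_le K C A B c s p l :
  0 < c -> 0 < s -> 0 <= C -> c * Rabs l <= s * p ->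
  K * c + C * s <= A * c + B * s -> K * c + C * s <= A * c - B * s ->
  K * p + C * Rabs l <= A * p + B * l.
Proof.
  intros Hc Hs HC Hl Hplus Hminus.
  assert (Hl1 : 0 <= s * p + c * l) by (pose proof (Rle_abs (- l)); rewrite Rabs_Ropp in *; nra).
  assert (Hl2 : 0 <= s * p - c * l) by (pose proof (Rle_abs l); nra).
  assert (0 <= (s * p + c * l) * (A * c + B * s - (K * c + C * s))) by (apply Rmult_le_pos; lra).
  assert (0 <= (s * p - c * l) * (A * c - B * s - (K * c + C * s))) by (apply Rmult_le_pos; lra).
  assert (s * C * (c * Rabs l) <= s * C * (s * p)) by (apply Rmult_le_compat_l; nra).
  apply (Rmult_le_reg_l (c * s)); [nra|]. nra.
Qed.

Lemma rotation_inv phi X Y p l :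
  p = cos phi * Y + sin phi * X -> l = cos phi * X - sin phi * Y ->
  X = sin phi * p + cos phi * l /\ Y = cos phi * p - sin phi * l.
Proof.
  intros -> ->. pose proof (sin2_cos2 phi) as Hsc; unfold Rsqr in Hsc.
  split.
  - transitivity (X * (sin phi * sin phi + cos phi * cos phi)); [rewrite Hsc|]; ring.
  - transitivity (Y * (sin phi * sin phi + cos phi * cos phi)); [rewrite Hsc|]; ring.
Qed.

Section Rotation.

Variable g : R.
Hypothesis g_pos : 0 < g.
Hypothesis g_small : 14 * g <= PI.

Variables phi X Y p l : R.
Hypothesis rot_p : p = cos phi * Y + sin phi * X.
Hypothesis rot_l : l = cos phi * X - sin phi * Y.
Hypothesis in_rotated_cone : cos (2 * g) * Rabs l <= sin (2 * g) * p.

Lemma potential_rotate_small :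
  4 * g <= phi <= PI / 2 - 3 * g -> potential g p l <= potential g Y X.
Proof.
  intros Hphi.
  destruct (rotation_inv phi X Y p l rot_p rot_l) as [HX HY].
  pose proof (cos_2g_pos g g_pos g_small). pose proof (sin_2g_pos g g_pos g_small).
  pose proof (lat_coef_pos g g_pos g_small).
  pose proof (potential_boundary_le g g_pos g_small (PI / 2 - (phi + 2 * g))) as Hplus.
  pose proof (potential_boundary_le g g_pos g_small (PI / 2 - (phi - 2 * g))) as Hminus.
  rewrite cos_shift, sin_shift, sin_plus, cos_plus in Hplus.
  rewrite cos_shift, sin_shift, sin_minus, cos_minus in Hminus.
  assert (lat_coef g * X <= lat_coef g * Rabs X) by (apply Rmult_le_compat_l; [lra|apply Rle_abs]).
  enough (proj_coef g * p + lat_coef g * Rabs l <= proj_coef g * Y + lat_coef g * X)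
    by (unfold potential; lra).
  rewrite HX, HY.
  replace (proj_coef g * (cos phi * p - sin phi * l) + lat_coef g * (sin phi * p + cos phi * l))
    with ((proj_coef g * cos phi + lat_coef g * sin phi) * p
          + (lat_coef g * cos phi - proj_coef g * sin phi) * l) by ring.
  apply (cone_sublinear_le _ _ _ _ (cos (2 * g)) (sin (2 * g))); lra.
Qed.

Lemma rotated_proj_nonneg : 0 <= p.
Proof.
  pose proof (cos_2g_pos g g_pos g_small). pose proof (sin_2g_pos g g_pos g_small).
  pose proof (Rabs_pos l). nra.
Qed.

(* On the last cone that still meets the half-plane [Y > 0] the bound is an
   equality. *)
Lemma potential_rotate_tight :
  phi = PI / 2 + g -> 0 < Y -> potential g p l <= potential g Y X.
Proof.
  intros Hphi HY0.
  destruct (rotation_inv phi X Y p l rot_p rot_l) as [HX HY].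
  replace phi with (PI / 2 - - g) in HX, HY by lra.
  rewrite sin_shift, cos_shift, sin_neg, cos_neg in HX, HY.
  pose proof (sin_g_pos g g_pos g_small). pose proof (cos_g_pos g g_pos g_small).
  pose proof (lat_coef_pos g g_pos g_small). pose proof rotated_proj_nonneg.
  pose proof (proj_coef_mul_1_add_sin g g_pos g_small).
  pose proof (lat_coef_eq g g_pos g_small).
  assert (Hl : l < 0) by nra.
  assert (lat_coef g * X <= lat_coef g * Rabs X) by (apply Rmult_le_compat_l; [lra|apply Rle_abs]).
  unfold potential. rewrite (Rabs_left l Hl).
  enough (proj_coef g * p + lat_coef g * - l = proj_coef g * Y + lat_coef g * X) by lra.
  rewrite HX, HY. nra.
Qed.

Lemma rotate_behind_nonpos :
  PI / 2 + 2 * g <= phi <= 3 * (PI / 2) - 2 * g -> Y <= 0.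
Proof.
  intros Hphi.
  destruct (rotation_inv phi X Y p l rot_p rot_l) as [_ HY].
  pose proof (cos_2g_pos g g_pos g_small). pose proof (sin_2g_pos g g_pos g_small).
  pose proof rotated_proj_nonneg.
  assert (Hlat : - sin phi * l <= Rabs (sin phi) * Rabs l).
  { rewrite <- Rabs_mult, <- Rabs_Ropp. replace (- sin phi * l) with (- (sin phi * l)) by ring.
    apply Rle_abs. }
  assert (Hsl : cos (2 * g) * (Rabs (sin phi) * Rabs l) <= Rabs (sin phi) * (sin (2 * g) * p)).
  { replace (cos (2 * g) * (Rabs (sin phi) * Rabs l))
      with (Rabs (sin phi) * (cos (2 * g) * Rabs l)) by ring.
    apply Rmult_le_compat_l; [apply Rabs_pos | exact in_rotated_cone]. }
  assert (Hcos : cos phi * cos (2 * g) + sin (2 * g) * Rabs (sin phi) <= 0).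
  { destruct (Rle_lt_dec 0 (sin phi)).
    - rewrite Rabs_right by lra.
      replace (cos phi * cos (2 * g) + sin (2 * g) * sin phi) with (cos (phi - 2 * g))
        by (rewrite cos_minus; ring).
      apply cos_le_0; lra.
    - rewrite Rabs_left by lra.
      replace (cos phi * cos (2 * g) + sin (2 * g) * - sin phi) with (cos (phi + 2 * g))
        by (rewrite cos_plus; ring).
      apply cos_le_0; lra. }
  assert (cos (2 * g) * Y <= p * (cos phi * cos (2 * g) + sin (2 * g) * Rabs (sin phi)))
    by (rewrite HY; nra).
  nra.
Qed.

End Rotation.

Section RotationByCones.

Variable k : nat.
Hypothesis k_ge1 : (1 <= k)%nat.
Variable g : R.
Hypothesis g_def : (4 * INR k + 3) * g = PI / 2.

Lemma quarter_aperture_pos : 0 < g.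
Proof.
  pose proof PI_RGT_0. assert (0 <= INR k) by apply pos_INR. nra.
Qed.

Lemma quarter_aperture_small : 14 * g <= PI.
Proof.
  pose proof quarter_aperture_pos. assert (1 <= INR k) by (apply (le_INR 1); exact k_ge1). nra.
Qed.

Lemma potential_rotate_first_half n X Y p l :
  (1 <= n <= k + 1)%nat ->
  p = cos (INR n * (4 * g)) * Y + sin (INR n * (4 * g)) * X ->
  l = cos (INR n * (4 * g)) * X - sin (INR n * (4 * g)) * Y ->
  cos (2 * g) * Rabs l <= sin (2 * g) * p -> 0 < Y ->
  potential g p l <= potential g Y X.
Proof.
  intros Hn Hp Hl Hcone HY.
  pose proof quarter_aperture_pos as Hg0. pose proof quarter_aperture_small as Hg14.
  assert (Hn1 : 1 <= INR n) by (apply (le_INR 1); lia).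
  destruct (Nat.eq_dec n (k + 1)) as [-> | Hnk].
  - apply (potential_rotate_tight g Hg0 Hg14 (INR (k + 1) * (4 * g)) X Y p l); auto.
    rewrite plus_INR. simpl INR. lra.
  - assert (Hnk' : INR n <= INR k) by (apply le_INR; lia).
    apply (potential_rotate_small g Hg0 Hg14 (INR n * (4 * g)) X Y p l); auto.
    nra.
Qed.

Lemma potential_rotate_cones n X Y p l :
  (n < 4 * k + 3)%nat ->
  p = cos (INR n * (4 * g)) * Y + sin (INR n * (4 * g)) * X ->
  l = cos (INR n * (4 * g)) * X - sin (INR n * (4 * g)) * Y ->
  cos (2 * g) * Rabs l <= sin (2 * g) * p -> 0 < Y ->
  potential g p l <= potential g Y X.
Proof.
  intros Hn Hp Hl Hcone HY.
  pose proof quarter_aperture_pos as Hg0. pose proof quarter_aperture_small as Hg14.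
  destruct (Nat.eq_dec n 0) as [-> | Hn0].
  { simpl INR in Hp, Hl. rewrite Rmult_0_l, cos_0, sin_0 in Hp, Hl.
    replace p with Y by lra. replace l with X by lra. lra. }
  destruct (le_lt_dec n (k + 1)) as [Hn1 | Hn1].
  { apply (potential_rotate_first_half n); auto; lia. }
  destruct (le_lt_dec n (3 * k + 1)) as [Hn2 | Hn2].
  - exfalso.
    assert (INR (k + 2) <= INR n) by (apply le_INR; lia).
    assert (INR n <= INR (3 * k + 1)) by (apply le_INR; lia).
    rewrite plus_INR, mult_INR in *. simpl INR in *.
    enough (Y <= 0) by lra.
    apply (rotate_behind_nonpos g Hg0 Hg14 (INR n * (4 * g)) X Y p l Hp Hl Hcone). nra.
  - (* Reflecting in the bisector turns a rotation by [n] cones into one by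
       [4k + 3 - n] cones. *)
    assert (Hmirror : INR n * (4 * g) = 2 * PI - INR (4 * k + 3 - n) * (4 * g)).
    { rewrite minus_INR by lia. rewrite plus_INR, mult_INR. simpl INR. lra. }
    assert (Hc : cos (INR n * (4 * g)) = cos (INR (4 * k + 3 - n) * (4 * g))).
    { rewrite Hmirror, cos_minus, cos_2PI, sin_2PI. ring. }
    assert (Hs : sin (INR n * (4 * g)) = - sin (INR (4 * k + 3 - n) * (4 * g))).
    { rewrite Hmirror, sin_minus, cos_2PI, sin_2PI. ring. }
    rewrite Hc, Hs in Hp, Hl.
    unfold potential. rewrite <- (Rabs_Ropp l), <- (Rabs_Ropp X).
    apply (potential_rotate_first_half (4 * k + 3 - n)); try lia.
    + rewrite Hp. ring.
    + rewrite Hl. ring.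
    + rewrite Rabs_Ropp. exact Hcone.
    + exact HY.
Qed.

End RotationByCones.

Definition lat (m i : nat) (u v : pt) : R :=
  (fst v - fst u) * sin (bis_angle m i) - (snd v - snd u) * cos (bis_angle m i).

Lemma proj_lat_sq m i u v : proj m i u v ^ 2 + lat m i u v ^ 2 = edist u v ^ 2.
Proof.
  unfold proj, lat, edist.
  rewrite pow2_sqrt by (apply Rplus_le_le_0_compat; apply pow2_ge_0).
  pose proof (sin2_cos2 (bis_angle m i)) as Hsc; unfold Rsqr in Hsc.
  transitivity (((fst v - fst u) ^ 2 + (snd v - snd u) ^ 2)
                * (sin (bis_angle m i) * sin (bis_angle m i)
                   + cos (bis_angle m i) * cos (bis_angle m i))); [ring|].
  rewrite Hsc. ring.
Qed.

Lemma proj_rotate m i j u v :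
  proj m j u v = cos (bis_angle m i - bis_angle m j) * proj m i u v
                 + sin (bis_angle m i - bis_angle m j) * lat m i u v.
Proof.
  unfold proj, lat. rewrite cos_minus, sin_minus.
  pose proof (sin2_cos2 (bis_angle m i)) as Hsc; unfold Rsqr in Hsc.
  set (si := sin (bis_angle m i)) in *. set (ci := cos (bis_angle m i)) in *.
  transitivity (((fst v - fst u) * cos (bis_angle m j) + (snd v - snd u) * sin (bis_angle m j))
                * (si * si + ci * ci)); [rewrite Hsc|]; ring.
Qed.

Lemma lat_rotate m i j u v :
  lat m j u v = cos (bis_angle m i - bis_angle m j) * lat m i u v
                - sin (bis_angle m i - bis_angle m j) * proj m i u v.
Proof.
  unfold proj, lat. rewrite cos_minus, sin_minus.
  pose proof (sin2_cos2 (bis_angle m i)) as Hsc; unfold Rsqr in Hsc.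
  set (si := sin (bis_angle m i)) in *. set (ci := cos (bis_angle m i)) in *.
  transitivity (((fst v - fst u) * sin (bis_angle m j) - (snd v - snd u) * cos (bis_angle m j))
                * (si * si + ci * ci)); [rewrite Hsc|]; ring.
Qed.

Lemma proj_sub m i u v w : proj m i v w = proj m i u w - proj m i u v.
Proof. unfold proj. ring. Qed.

Lemma lat_sub m i u v w : lat m i v w = lat m i u w - lat m i u v.
Proof. unfold lat. ring. Qed.

Lemma edist_pos u v : u <> v -> 0 < edist u v.
Proof.
  intros Huv. unfold edist. apply sqrt_lt_R0.
  destruct u as [x1 y1], v as [x2 y2]; simpl.
  destruct (Req_dec x1 x2) as [<- | Hx]; [destruct (Req_dec y1 y2) as [<- | Hy]|].
  - now contradiction Huv.
  - pose proof (Rsqr_pos_lt (y2 - y1) ltac:(lra)). unfold Rsqr in *. nra.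
  - pose proof (Rsqr_pos_lt (x2 - x1) ltac:(lra)). pose proof (pow2_ge_0 (y2 - y1)).
    unfold Rsqr in *. nra.
Qed.

Section ConeCoordinates.

Variables (m i : nat) (u v : pt).
Hypothesis cone_uv : in_cone m i u v.
Hypothesis half_aperture_cos_pos : 0 < cos (theta m / 2).

Lemma in_cone_edist_le : cos (theta m / 2) * edist u v <= proj m i u v.
Proof. destruct cone_uv as [_ [_ H]]. lra. Qed.

Lemma in_cone_proj_pos : 0 < proj m i u v.
Proof.
  destruct cone_uv as [_ [Hvu _]].
  pose proof (edist_pos u v (not_eq_sym Hvu)). pose proof in_cone_edist_le. nra.
Qed.

Lemma in_cone_lat_le :
  0 <= sin (theta m / 2) ->
  cos (theta m / 2) * Rabs (lat m i u v) <= sin (theta m / 2) * proj m i u v.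
Proof.
  intros Hs. pose proof in_cone_edist_le. pose proof in_cone_proj_pos.
  pose proof (proj_lat_sq m i u v) as Hsq.
  pose proof (sin2_cos2 (theta m / 2)) as Hsc; unfold Rsqr in Hsc.
  apply Rsqr_incr_0; [| apply Rmult_le_pos; [lra | apply Rabs_pos] | nra].
  unfold Rsqr.
  replace (cos (theta m / 2) * Rabs (lat m i u v) * (cos (theta m / 2) * Rabs (lat m i u v)))
    with (cos (theta m / 2) ^ 2 * lat m i u v ^ 2)
    by (rewrite <- (pow2_abs (lat m i u v)); ring).
  assert (0 <= cos (theta m / 2) * edist u v)
    by (apply Rmult_le_pos; [lra | apply sqrt_pos]).
  assert ((cos (theta m / 2) * edist u v) ^ 2 <= proj m i u v ^ 2) by (apply pow_incr; lra).
  nra.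
Qed.

End ConeCoordinates.

Lemma theta_pos m : (1 <= m)%nat -> 0 < theta m.
Proof.
  intros Hm. pose proof PI_RGT_0. assert (1 <= INR m) by (apply (le_INR 1); exact Hm).
  unfold theta. apply Rdiv_lt_0_compat; lra.
Qed.

Lemma theta_mul m : (1 <= m)%nat -> INR m * theta m = 2 * PI.
Proof.
  intros Hm. assert (1 <= INR m) by (apply (le_INR 1); exact Hm).
  unfold theta. field. lra.
Qed.

Lemma bis_angle_diff m i j : (i < m)%nat -> (j < m)%nat ->
  exists n, (n < m)%nat /\
    cos (bis_angle m i - bis_angle m j) = cos (INR n * theta m) /\
    sin (bis_angle m i - bis_angle m j) = sin (INR n * theta m).
Proof.
  intros Hi Hj. pose proof (theta_mul m ltac:(lia)) as Hm.
  replace (bis_angle m i - bis_angle m j) with ((INR j - INR i) * theta m)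
    by (unfold bis_angle; ring).
  destruct (le_lt_dec i j) as [Hij | Hij].
  - exists (j - i)%nat. rewrite minus_INR by lia. split; [lia | auto].
  - exists (j + m - i)%nat. split; [lia |].
    rewrite minus_INR, plus_INR by lia.
    replace ((INR j + INR m - INR i) * theta m)
      with ((INR j - INR i) * theta m + 2 * INR 1 * PI) by (simpl INR; nra).
    now rewrite cos_period, sin_period.
Qed.

Lemma cos_ge_of_abs_le x a : Rabs x <= a -> a <= PI -> cos a <= cos x.
Proof.
  intros Hx Ha.
  assert (Habs : cos x = cos (Rabs x)).
  { destruct (Rle_lt_dec 0 x); [rewrite Rabs_right | rewrite Rabs_left, cos_neg]; lra. }
  rewrite Habs. pose proof (Rabs_pos x).
  destruct (Req_dec (Rabs x) a) as [-> | Hne]; [lra |].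
  left. apply cos_decreasing_1; lra.
Qed.

Lemma unit_angle x y : x ^ 2 + y ^ 2 = 1 ->
  exists psi, 0 <= psi <= 2 * PI /\ cos psi = x /\ sin psi = y.
Proof.
  intros Hxy. pose proof PI_RGT_0.
  assert (Hx : -1 <= x <= 1) by (pose proof (pow2_ge_0 y); split; nra).
  assert (Hsin : sin (acos x) = Rabs y).
  { rewrite sin_acos by exact Hx. rewrite <- sqrt_Rsqr_abs. f_equal. unfold Rsqr. nra. }
  pose proof (acos_bound x).
  destruct (Rle_lt_dec 0 y) as [Hy | Hy].
  - exists (acos x). rewrite cos_acos, Hsin, Rabs_right by lra. repeat split; lra.
  - exists (2 * PI - acos x).
    rewrite cos_minus, sin_minus, cos_2PI, sin_2PI, cos_acos, Hsin, Rabs_left by lra.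
    repeat split; lra || ring.
Qed.

Lemma nearest_bisector m psi : (1 <= m)%nat -> 0 <= psi <= 2 * PI ->
  exists j, (j < m)%nat /\ cos (theta m / 2) <= cos (psi - INR j * theta m).
Proof.
  intros Hm Hpsi. pose proof (theta_pos m Hm) as Hth. pose proof (theta_mul m Hm) as HmR.
  assert (1 <= INR m) by (apply (le_INR 1); exact Hm).
  set (t := psi / theta m).
  assert (Ht : psi = t * theta m) by (unfold t; field; lra).
  assert (Ht_bounds : 0 <= t <= INR m) by (split; nra).
  set (N := up (t - 1 / 2)).
  destruct (archimed (t - 1 / 2)) as [HN1 HN2]; fold N in HN1, HN2.
  assert (Hclose : cos (theta m / 2) <= cos (psi - IZR N * theta m))
    by (apply cos_ge_of_abs_le; [apply Rabs_le |]; nra).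
  assert (HN0 : (-1 < N)%Z) by (apply lt_IZR; simpl; lra).
  assert (HNm : (N < Z.of_nat m + 1)%Z)
    by (apply lt_IZR; rewrite plus_IZR, <- INR_IZR_INZ; simpl; lra).
  destruct (Z.eq_dec N (Z.of_nat m)) as [HNe | HNe].
  - exists 0%nat. split; [lia |].
    rewrite HNe, <- INR_IZR_INZ, HmR in Hclose.
    replace (psi - INR 0 * theta m) with (psi - 2 * PI + 2 * INR 1 * PI) by (simpl; ring).
    now rewrite cos_period.
  - exists (Z.to_nat N). split; [lia |].
    rewrite INR_IZR_INZ, Z2Nat.id by lia. exact Hclose.
Qed.

Lemma edist_sq u v : edist u v ^ 2 = (fst v - fst u) ^ 2 + (snd v - snd u) ^ 2.
Proof.
  unfold edist. apply pow2_sqrt. apply Rplus_le_le_0_compat; apply pow2_ge_0.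
Qed.

Lemma cone_exists m u v : (1 <= m)%nat -> u <> v -> exists j, in_cone m j u v.
Proof.
  intros Hm Huv. pose proof (edist_pos u v Huv) as Hr. pose proof (edist_sq u v) as Hsq.
  set (r := edist u v) in *.
  (* [psi] is the direction of [v - u] measured clockwise from the upward
     vertical, like the cone indices. *)
  destruct (unit_angle ((snd v - snd u) / r) ((fst v - fst u) / r)) as (psi & Hpsi & Hc & Hs).
  { replace (((snd v - snd u) / r) ^ 2 + ((fst v - fst u) / r) ^ 2)
      with (((fst v - fst u) ^ 2 + (snd v - snd u) ^ 2) / r ^ 2) by (field; lra).
    rewrite <- Hsq. field. lra. }
  destruct (nearest_bisector m psi Hm Hpsi) as (j & Hj & Hcos).
  exists j. split; [exact Hj | split; [exact (not_eq_sym Huv) |]].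
  assert (Hproj : proj m j u v = r * cos (psi - INR j * theta m)).
  { unfold proj, bis_angle. rewrite cos_shift, sin_shift, cos_minus, Hc, Hs. field. lra. }
  fold r. rewrite Hproj. apply Rle_ge. apply Rmult_le_compat_l; lra.
Qed.

Lemma list_argmin {A : Type} (f : A -> R) (Q : A -> Prop) (P : list A) :
  (exists w, In w P /\ Q w) ->
  exists v, In v P /\ Q v /\ forall w, In w P -> Q w -> f v <= f w.
Proof.
  induction P as [| a P IH]; intros [w [Hw Hq]]; [destruct Hw |].
  destruct (classic (exists w, In w P /\ Q w)) as [Hex | Hnone].
  - destruct (IH Hex) as (v & Hv & Hqv & Hmin).
    destruct (classic (Q a /\ f a < f v)) as [[Hqa Ha] | Hna].
    + exists a. split; [now left | split; [exact Hqa |]].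
      intros z [<- | Hz] Hqz; [lra |]. specialize (Hmin z Hz Hqz). lra.
    + exists v. split; [now right | split; [exact Hqv |]].
      intros z [<- | Hz] Hqz; [| now apply Hmin].
      destruct (Rle_lt_dec (f v) (f a)); [assumption |]. exfalso. now apply Hna.
  - destruct Hw as [<- | Hw]; [| exfalso; apply Hnone; eauto].
    exists a. split; [now left | split; [exact Hq |]].
    intros z [<- | Hz] Hqz; [lra |]. exfalso. apply Hnone; eauto.
Qed.

Lemma filter_length_le {A : Type} (f g : A -> bool) (l : list A) :
  (forall x, In x l -> f x = true -> g x = true) ->
  (length (filter f l) <= length (filter g l))%nat.
Proof.
  induction l as [| a l IH]; simpl; intros Hfg; [lia |].
  specialize (IH (fun x Hx => Hfg x (or_intror Hx))).
  destruct (f a) eqn:Ef; [rewrite (Hfg a (or_introl eq_refl) Ef) |]; simpl;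
    [| destruct (g a)]; simpl; lia.
Qed.

Lemma filter_length_lt {A : Type} (f g : A -> bool) (l : list A) y :
  (forall x, In x l -> f x = true -> g x = true) ->
  In y l -> f y = false -> g y = true ->
  (length (filter f l) < length (filter g l))%nat.
Proof.
  induction l as [| a l IH]; simpl; intros Hfg Hy Hfy Hgy; [destruct Hy |].
  pose proof (fun x Hx => Hfg x (or_intror Hx)) as Hfg'.
  destruct Hy as [-> | Hy].
  - rewrite Hfy, Hgy. simpl. pose proof (filter_length_le f g l Hfg'). lia.
  - specialize (IH Hfg' Hy Hfy Hgy).
    destruct (f a) eqn:Ef; [rewrite (Hfg a (or_introl eq_refl) Ef) |]; simpl;
      [| destruct (g a)]; simpl; lia.
Qed.

Definition closer_pairs (P : list pt) (d : R) : nat :=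
  length (filter (fun pq => if Rlt_dec (edist (fst pq) (snd pq)) d then true else false)
            (list_prod P P)).

Lemma closer_pairs_lt P v w d :
  In v P -> In w P -> edist v w < d ->
  (closer_pairs P (edist v w) < closer_pairs P d)%nat.
Proof.
  intros Hv Hw Hd. unfold closer_pairs. apply filter_length_lt with (y := (v, w)).
  - intros [a b] _. simpl.
    destruct (Rlt_dec (edist a b) (edist v w)); [| discriminate].
    destruct (Rlt_dec (edist a b) d); [reflexivity | lra].
  - now apply in_prod.
  - simpl. destruct (Rlt_dec (edist v w) (edist v w)); [lra | reflexivity].
  - simpl. destruct (Rlt_dec (edist v w) d); [reflexivity | lra].
Qed.

Lemma cone_step_shortens c s Pv Pw Lv Lw :
  0 < c -> 0 <= s -> 3 * s ^ 2 < c ^ 2 -> 0 < Pv -> Pv < Pw ->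
  c * Rabs Lv <= s * Pv -> c * Rabs Lw <= s * Pw ->
  (Pw - Pv) ^ 2 + (Lw - Lv) ^ 2 < Pw ^ 2 + Lw ^ 2.
Proof.
  intros Hc Hs Hsc HPv HPw HLv HLw.
  pose proof (Rabs_pos Lv). pose proof (Rabs_pos Lw).
  assert (Hcross : - (Lw * Lv) <= Rabs Lw * Rabs Lv)
    by (rewrite <- Rabs_mult, <- Rabs_Ropp; apply Rle_abs).
  assert (HLv2 : Lv ^ 2 = Rabs Lv ^ 2) by (now rewrite <- pow2_abs).
  assert (c * Rabs Lw * (c * Rabs Lv) <= s * Pw * (s * Pv)) by (apply Rmult_le_compat; nra).
  assert (c * Rabs Lv * (c * Rabs Lv) <= s * Pv * (s * Pv)) by (apply Rmult_le_compat; nra).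
  assert (s ^ 2 * (Pv * Pv) <= s ^ 2 * (Pv * Pw)) by (apply Rmult_le_compat_l; nra).
  assert (c ^ 2 * (Pv * Pv) <= c ^ 2 * (Pv * Pw)) by (apply Rmult_le_compat_l; nra).
  assert (Pv * Pw * (3 * s ^ 2 - c ^ 2) < 0) by (assert (0 < Pv * Pw) by nra; nra).
  apply (Rmult_lt_reg_l (c ^ 2)); [nra |]. nra.
Qed.

Lemma potential_edge_le g e Pv Pw Lv Lw :
  0 < g -> 14 * g <= PI ->
  cos (2 * g) * e <= Pv -> cos (2 * g) * Rabs Lv <= sin (2 * g) * Pv ->
  e + potential g (Pw - Pv) (Lw - Lv) <= potential g Pw Lw.
Proof.
  intros Hg0 Hg14 He HLv.
  pose proof (cos_2g_pos g Hg0 Hg14). pose proof (lat_coef_pos g Hg0 Hg14).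
  assert (Hsub : Rabs (Lw - Lv) <= Rabs Lw + Rabs Lv).
  { unfold Rminus. rewrite <- (Rabs_Ropp Lv). apply Rabs_triang. }
  assert (Hedge : cos (2 * g) * (e + lat_coef g * Rabs Lv) <= cos (2 * g) * (proj_coef g * Pv)).
  { unfold proj_coef, tan.
    replace (cos (2 * g) * ((1 / cos (2 * g) + lat_coef g * (sin (2 * g) / cos (2 * g))) * Pv))
      with (Pv + lat_coef g * (sin (2 * g) * Pv)) by (field; lra).
    assert (lat_coef g * (cos (2 * g) * Rabs Lv) <= lat_coef g * (sin (2 * g) * Pv))
      by (apply Rmult_le_compat_l; lra).
    nra. }
  apply Rmult_le_reg_l in Hedge; [| lra].
  assert (lat_coef g * Rabs (Lw - Lv) <= lat_coef g * (Rabs Lw + Rabs Lv))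
    by (apply Rmult_le_compat_l; lra).
  unfold potential. nra.
Qed.

Section ThetaRouting.

Variable k : nat.
Hypothesis k_ge1 : (1 <= k)%nat.

Local Notation m := (4 * k + 3)%nat.
Local Notation g := (theta m / 4).

Lemma quarter_theta_def : (4 * INR k + 3) * g = PI / 2.
Proof.
  unfold theta. rewrite plus_INR, mult_INR. simpl INR.
  assert (0 <= INR k) by apply pos_INR. field. lra.
Qed.

Let g_pos : 0 < g := quarter_aperture_pos k g quarter_theta_def.
Let g_small : 14 * g <= PI := quarter_aperture_small k k_ge1 g quarter_theta_def.

Lemma in_theta_cone_bounds i u v : in_cone m i u v ->
  0 < proj m i u v /\
  cos (2 * g) * edist u v <= proj m i u v /\
  cos (2 * g) * Rabs (lat m i u v) <= sin (2 * g) * proj m i u v.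
Proof.
  intros Hcone.
  replace (2 * g) with (theta m / 2) by field.
  pose proof (cos_2g_pos g g_pos g_small) as Hc. pose proof (sin_2g_pos g g_pos g_small) as Hs.
  replace (2 * g) with (theta m / 2) in Hc, Hs by field.
  split; [| split].
  - now apply in_cone_proj_pos.
  - now apply in_cone_edist_le.
  - apply in_cone_lat_le; auto; lra.
Qed.

Lemma potential_change_cone i j v w : (i < m)%nat -> in_cone m j v w ->
  0 < proj m i v w ->
  potential g (proj m j v w) (lat m j v w) <= potential g (proj m i v w) (lat m i v w).
Proof.
  intros Hi Hj HY.
  destruct (bis_angle_diff m i j Hi (proj1 Hj)) as (n & Hn & Hcos & Hsin).
  destruct (in_theta_cone_bounds j v w Hj) as (_ & _ & Hlat).
  replace (theta m) with (4 * g) in Hcos, Hsin by field.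
  apply (potential_rotate_cones k k_ge1 g quarter_theta_def n); auto.
  - rewrite (proj_rotate m i j), Hcos, Hsin. ring.
  - rewrite (lat_rotate m i j), Hcos, Hsin. ring.
Qed.

Lemma closer_in_cone i u v w : in_cone m i u v -> in_cone m i u w ->
  proj m i u v < proj m i u w -> edist v w < edist u w.
Proof.
  intros Hv Hw Hvw.
  destruct (in_theta_cone_bounds i u v Hv) as (HPv & _ & HLv).
  destruct (in_theta_cone_bounds i u w Hw) as (_ & _ & HLw).
  pose proof (proj_lat_sq m i v w) as Hvw2. pose proof (proj_lat_sq m i u w) as Huw2.
  rewrite (proj_sub m i u), (lat_sub m i u) in Hvw2.
  pose proof (cone_step_shortens (cos (2 * g)) (sin (2 * g)) _ _ _ _
                (cos_2g_pos g g_pos g_small) (Rlt_le _ _ (sin_2g_pos g g_pos g_small))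
                (sin_2g_sq_lt g g_pos g_small) HPv Hvw HLv HLw).
  apply Rsqr_incrst_0; [unfold Rsqr; lra | apply sqrt_pos | apply sqrt_pos].
Qed.

Variable P : list pt.
Hypothesis P_general : general_position m P.

Lemma theta_path_potential n : forall u w i,
  (closer_pairs P (edist u w) < n)%nat -> In u P -> In w P -> in_cone m i u w ->
  exists l, is_path (theta_edge m P) u l w /\
            path_length u l <= potential g (proj m i u w) (lat m i u w).
Proof.
  induction n as [| n IH]; intros u w i Hn Hu Hw Hcone; [lia |].
  destruct (list_argmin (proj m i u) (in_cone m i u) P (ex_intro _ w (conj Hw Hcone)))
    as (v & Hv & Hconev & Hmin).
  assert (Hedge : theta_edge m P u v) by (left; repeat split; eauto).
  destruct (in_theta_cone_bounds i u v Hconev) as (_ & Huv & HLv).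
  destruct (classic (v = w)) as [<- | Hvw].
  - exists (v :: nil). split; [now split |].
    cbn [path_length]. rewrite Rplus_0_r.
    pose proof (potential_edge_le g (edist u v) (proj m i u v) (proj m i u v)
                  (lat m i u v) (lat m i u v) g_pos g_small Huv HLv) as Hle.
    rewrite !Rminus_diag in Hle. unfold potential in Hle at 1.
    rewrite Rabs_R0 in Hle. lra.
  - assert (Hstep : proj m i u v < proj m i u w).
    { destruct P_general as (_ & Hproj_ne & _).
      pose proof (Hproj_ne v w i Hv Hw Hvw (proj1 Hcone)) as Hne.
      rewrite (proj_sub m i u) in Hne. specialize (Hmin w Hw Hcone). lra. }
    pose proof (closer_in_cone i u v w Hconev Hcone Hstep) as Hshorter.
    pose proof (closer_pairs_lt P v w _ Hv Hw Hshorter) as Hcloser.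
    destruct (cone_exists m v w ltac:(lia) Hvw) as [j Hj].
    destruct (IH v w j ltac:(lia) Hv Hw Hj) as (l & Hpath & Hlen).
    exists (v :: l). split; [now split |]. cbn [path_length].
    pose proof (potential_change_cone i j v w (proj1 Hcone) Hj) as Hchange.
    rewrite (proj_sub m i u), (lat_sub m i u) in Hchange.
    pose proof (potential_edge_le g (edist u v) (proj m i u v) (proj m i u w)
                  (lat m i u v) (lat m i u w) g_pos g_small Huv HLv).
    enough (potential g (proj m j v w) (lat m j v w) <=
            potential g (proj m i u w - proj m i u v) (lat m i u w - lat m i u v)) by lra.
    apply Hchange. lra.
Qed.

End ThetaRouting.

Section MidpointAngle.

Variables (m i : nat) (u w : pt).
Hypothesis half_aperture_cos_pos : 0 < cos (theta m / 2).
Hypothesis cone_uw : in_cone m i u w.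

Lemma tri_mid_sub :
  fst (tri_mid m i u w) - fst u = proj m i u w * cos (bis_angle m i) /\
  snd (tri_mid m i u w) - snd u = proj m i u w * sin (bis_angle m i).
Proof.
  unfold tri_mid, tri_vertex. cbn [fst snd].
  replace (bis_angle m i + 1 * (theta m / 2)) with (bis_angle m i + theta m / 2) by ring.
  replace (bis_angle m i + -1 * (theta m / 2)) with (bis_angle m i - theta m / 2) by ring.
  rewrite cos_plus, cos_minus, sin_plus, sin_minus.
  split; field; lra.
Qed.

Lemma edist_tri_mid : edist u (tri_mid m i u w) = proj m i u w.
Proof.
  destruct tri_mid_sub as [Hx Hy].
  pose proof (in_cone_proj_pos m i u w cone_uw half_aperture_cos_pos).
  pose proof (sin2_cos2 (bis_angle m i)) as Hsc; unfold Rsqr in Hsc.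
  unfold edist. rewrite Hx, Hy.
  set (h := proj m i u w) in *. set (b := bis_angle m i) in *.
  replace ((h * cos b) ^ 2 + (h * sin b) ^ 2) with (h * h)
    by (transitivity (h * h * (sin b * sin b + cos b * cos b)); [rewrite Hsc |]; ring).
  apply sqrt_square. lra.
Qed.

Lemma uangle_tri_mid :
  cos (uangle u w (tri_mid m i u w)) = proj m i u w / edist u w /\
  sin (uangle u w (tri_mid m i u w)) = Rabs (lat m i u w) / edist u w.
Proof.
  pose proof (in_cone_proj_pos m i u w cone_uw half_aperture_cos_pos) as Hh.
  pose proof (edist_pos u w (not_eq_sym (proj1 (proj2 cone_uw)))) as Hr.
  pose proof (proj_lat_sq m i u w) as Hsq.
  destruct tri_mid_sub as [Hx Hy].
  set (h := proj m i u w) in *. set (r := edist u w) in *. set (l := lat m i u w) in *.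
  assert (Hratio : ((fst w - fst u) * (fst (tri_mid m i u w) - fst u) +
                    (snd w - snd u) * (snd (tri_mid m i u w) - snd u))
                   / (r * edist u (tri_mid m i u w)) = h / r).
  { rewrite Hx, Hy, edist_tri_mid. fold h.
    transitivity (h * h / (r * h)); [| field; lra].
    f_equal. unfold h, proj. ring. }
  assert (Hhr : -1 <= h / r <= 1).
  { assert (h <= r) by (pose proof (pow2_ge_0 l); nra).
    split; apply (Rmult_le_reg_r r); try lra; field_simplify; lra. }
  unfold uangle. fold r. rewrite Hratio, cos_acos, sin_acos by exact Hhr.
  split; [reflexivity |].
  rewrite <- (sqrt_Rsqr (Rabs l / r))
    by (apply Rmult_le_pos; [apply Rabs_pos | left; apply Rinv_0_lt_compat; lra]).
  f_equal. unfold Rsqr.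
  replace (Rabs l / r * (Rabs l / r)) with (l ^ 2 / r ^ 2) by (rewrite <- pow2_abs; field; lra).
  replace (l ^ 2) with (r ^ 2 - h ^ 2) by lra. field. lra.
Qed.

End MidpointAngle.

Theorem mainTheorem11 :
  forall (k : nat) (P : list pt),
    (1 <= k)%nat ->
    let m := (4 * k + 3)%nat in
    let th := theta m in
    general_position m P ->
    forall (u w : pt) (i : nat),
      In u P -> In w P -> u <> w ->
      in_cone m i u w ->
      let alpha := uangle u w (tri_mid m i u w) in
      exists l : list pt,
        is_path (theta_edge m P) u l w /\
        path_length u l <=
          (cos alpha / cos (th / 2)
           + (cos alpha * tan (th / 2) + sin alpha) * cos (th / 4)
             / (cos (th / 2) - sin (3 * th / 4))) * edist u w.
Proof.
  intros k P Hk m th HP u w i Hu Hw Huw Hcone alpha.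
  destruct (theta_path_potential k Hk P HP (S (closer_pairs P (edist u w))) u w i
              (Nat.lt_succ_diag_r _) Hu Hw Hcone) as (l & Hpath & Hlen).
  exists l. split; [exact Hpath |].
  pose proof (quarter_theta_def k) as Hg.
  pose proof (quarter_aperture_pos k _ Hg) as Hg0.
  pose proof (quarter_aperture_small k Hk _ Hg) as Hg14.
  pose proof (cos_2g_pos _ Hg0 Hg14) as Hc. pose proof (sin_3g_lt_cos_2g _ Hg0 Hg14).
  replace (th / 2) with (2 * (th / 4)) by field.
  replace (3 * th / 4) with (3 * (th / 4)) by field.
  assert (Hhalf : 0 < cos (th / 2)) by (replace (th / 2) with (2 * (th / 4)) by field; exact Hc).
  destruct (uangle_tri_mid m i u w Hhalf Hcone) as [Hcos Hsin].
  pose proof (edist_pos u w Huw).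
  unfold alpha. rewrite Hcos, Hsin.
  eapply Rle_trans; [exact Hlen |]. right.
  unfold potential, proj_coef, lat_coef, tan. unfold th, m in *. field. lra.
Qed.
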